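(* Let $t\ge1$ and $n=2(t+1)^2$. Let $\mathcal{C}_0\subseteq\mathbb{Z}_n^2$ be a linear $t$-error-correcting diameter perfect code with generator matrix $G_0$, and let $\mathcal{C}=\mathbf{x}+\mathcal{C}_0$ for some $\mathbf{x}=(x_1,x_2)\in\mathbb{Z}_n^2$. Suppose $\mathcal{C}$ is of Case I or Case II, and let $\mathcal{S}$ be the set of diameter perfect Sudoku grids with respect to $\mathcal{C}$ and its anticodes. (i) If $\mathcal{C}$ is of Case I, let $\mathcal{G}_\mathcal{S}=\langle \tau_1^{t+1}\tau_2^{t+1},\ \tau_2^{2(t+1)},\ \tau_2^{2x_2+1}s,\ \tau_1^{2x_1+2}\tau_2^{2x_2+1}r^2\rangle$. (ii) If $\mathcal{C}$ is of Case II and $G_0=[a~~b]$, let $\mathcal{G}_\mathcal{S}=\langle \tau_1^{a}\tau_2^{b},\ \tau_1^{2x_1+2}\tau_2^{2x_2+1}r^2\rangle$. Then in either case, for every $S\in\mathcal{S}$ and every $g\in\mathcal{G}_\mathcal{S}$, $g\cdot S\in\mathcal{S}$.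
   Context: $\mathbb{Z}_n$ is the integers modulo $n$; Lee weight $\mathrm{wt}_L(\mathbf{u})=\sum_i\min\{u_i,n-u_i\}$, Lee distance $d_L(\mathbf{u},\mathbf{v})=\mathrm{wt}_L(\mathbf{u}-\mathbf{v})$. A linear code is a submodule of $\mathbb{Z}_n^2$; its generator matrix has rows forming a minimal spanning set. Codes $\mathcal{C}_1,\mathcal{C}_2$ are equivalent if $\mathcal{C}_1P=\mathcal{C}_2$ for a permutation matrix $P$. For an adjacent pair $\{p_1,p_2\}$ (Lee distance 1), $\mathcal{A}_{2t+1}$ is the set of points at Lee distance at most $t$ from $p_1$ or $p_2$; $\{p_1,p_2\}$ is its core; in $\mathbb{Z}_n^2$ it has $2(t+1)^2=n$ points and is a maximum-size anticode of diameter $2t+1$. A $t$-error-correcting diameter perfect code here means a $(2t+1)$-diameter perfect code $\mathcal{C}\subseteq\mathbb{Z}_n^2$ with minimum distance $2t+2$ and anticode $\mathcal{A}_{2t+1}$, i.e. $|\mathcal{C}|\cdot|\mathcal{A}_{2t+1}|=n^2$, so $|\mathcal{C}|=n$. Case I: $\mathcal{C}_0$ is equivalent to the code $\mathcal{C}'$ generated by $\begin{bmatrix}t+1&t+1\\0&2(t+1)\end{bmatrix}$; Case II: $\mathcal{C}_0$ is equivalent to the code $\mathcal{C}''$ generated by $[1~~2t+1]$. Convention: for each codeword $\mathbf{c}$, the associated translate of $\mathcal{A}_{2t+1}$ has core $\{\mathbf{c},\mathbf{c}+(1,0)\}$; these $n$ translates partition $\mathbb{Z}_n^2$. Writing $\mathcal{C}=\{\mathbf{c}_1,\dots,\mathbf{c}_n\}$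 and $\mathcal{A}_i$ for the translate associated to $\mathbf{c}_i$, the palette grid $\mathcal{I}_{\mathcal{C},\mathcal{A}}$ is the $n\times n$ array (rows/columns indexed by $\mathbb{Z}_n$, position $(x,y)$ = row $x$, column $y$) with entry $i$ at each position of $\mathcal{A}_i$. Two $n\times n$ arrays over $n$-sets are orthogonal if all $n^2$ ordered pairs of corresponding entries are distinct. A diameter perfect Sudoku grid is a Latin square of order $n$ on $[n]$ orthogonal to $\mathcal{I}_{\mathcal{C},\mathcal{A}}$. Maps on arrays (indices mod $n$): $(r(A))_{i,j}=A_{n-1-j,i}$, $(s(A))_{i,j}=A_{i,n-1-j}$, $(\tau_1(A))_{i,j}=A_{i-1,j}$, $(\tau_2(A))_{i,j}=A_{i,j-1}$; the generated group acts by $\varphi\cdot A=\varphi(A)$. *)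

From mathcomp Require Import all_boot all_order all_fingroup all_algebra.
Set Implicit Arguments. Unset Strict Implicit. Unset Printing Implicit Defensive.
Import GRing.Theory.
Local Open Scope ring_scope.

Definition nt (t : nat) : nat := (2 * (t + 1) ^ 2)%N.

(* Points of Z_n^2 ; an array position (i,j) = row i, column j. *)
Definition point (n : nat) := ('Z_n * 'Z_n)%type.

Section Defs.
Variable n : nat.
Local Notation pt := (point n).

Definition padd (u v : pt) : pt := (u.1 + v.1, u.2 + v.2).
Definition psub (u v : pt) : pt := (u.1 - v.1, u.2 - v.2).
Definition pscale (k : 'Z_n) (u : pt) : pt := (k * u.1, k * u.2).

Definition leeZ (a : 'Z_n) : nat := minn (a : nat) (n - a).
Definition lee_wt (u : pt) : nat := (leeZ u.1 + leeZ u.2)%N.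
Definition lee_dist (u v : pt) : nat := lee_wt (psub u v).

Definition linear_code (C : {set pt}) : Prop :=
  [/\ (0%R, 0%R) \in C,
      (forall u v, u \in C -> v \in C -> padd u v \in C),
      (forall u, u \in C -> psub (0%R, 0%R) u \in C) &
      (forall k u, u \in C -> pscale k u \in C)].

(* Submodules spanned by one / two vectors (rows of a generator matrix). *)
Definition span1 (u : pt) : {set pt} := [set pscale k u | k : 'Z_n].
Definition span2 (u v : pt) : {set pt} :=
  [set padd (pscale k1 u) (pscale k2 v) | k1 : 'Z_n, k2 : 'Z_n].

(* Equivalence of codes via a 2x2 permutation matrix (identity or swap). *)
Definition swap_pt (u : pt) : pt := (u.2, u.1).
Definition code_equiv (C1 C2 : {set pt}) : Prop :=
  C2 = C1 \/ C2 = [set swap_pt u | u in C1].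

Definition anticode (t : nat) (c : pt) : {set pt} :=
  [set p | (lee_dist p c <= t)%N || (lee_dist p (padd c (1%R, 0%R)) <= t)%N].

Definition diam_perfect (t : nat) (C : {set pt}) : Prop :=
  [/\ (forall u v, u \in C -> v \in C -> u != v -> (2 * t + 2 <= lee_dist u v)%N),
      (exists u v, [/\ u \in C, v \in C, u != v & lee_dist u v = (2 * t + 2)%N]) &
      (#|C| * #|anticode t (0%R, 0%R)| = n ^ 2)%N].

(* Palette grid: entry at position p is (the label of) the codeword c whose
   associated anticode translate contains p; labels are the codewords. *)
Definition palette (t : nat) (C : {set pt}) (p : pt) : option pt :=
  [pick c in C | p \in anticode t c].

Definition arr := {ffun pt -> 'I_n}.

Definition latin (L : arr) : Prop :=
  (forall (i : 'Z_n) (k : 'I_n), exists! j : 'Z_n, L (i, j) = k) /\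
  (forall (j : 'Z_n) (k : 'I_n), exists! i : 'Z_n, L (i, j) = k).

Definition orthogonal (T1 T2 : Type) (A : pt -> T1) (B : pt -> T2) : Prop :=
  forall p q, (A p, B p) = (A q, B q) -> p = q.

Definition sudoku (t : nat) (C : {set pt}) (S : arr) : Prop :=
  latin S /\ orthogonal S (palette t C).

Definition reidx (f : pt -> pt) (A : arr) : arr := [ffun p => A (f p)].

Lemma reidx_inj (f g : pt -> pt) : cancel g f -> injective (reidx f).
Proof.
move=> gK A B /ffunP H; apply/ffunP => p.
by have := H (g p); rewrite !ffunE gK.
Qed.

Definition rpos (p : pt) : pt := (-1 - p.2, p.1).
Definition rpos_inv (p : pt) : pt := (p.2, -1 - p.1).
Definition spos (p : pt) : pt := (p.1, -1 - p.2).
Definition t1pos (p : pt) : pt := (p.1 - 1, p.2).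
Definition t1pos_inv (p : pt) : pt := (p.1 + 1, p.2).
Definition t2pos (p : pt) : pt := (p.1, p.2 - 1).
Definition t2pos_inv (p : pt) : pt := (p.1, p.2 + 1).

Lemma rpos_K : cancel rpos_inv rpos.
Proof. by case=> a b; rewrite /rpos /rpos_inv /= opprB addrC subrK. Qed.
Lemma spos_K : cancel spos spos.
Proof. by case=> a b; rewrite /spos /= opprB addrC subrK. Qed.
Lemma t1pos_K : cancel t1pos_inv t1pos.
Proof. by case=> a b; rewrite /t1pos /t1pos_inv /= addrK. Qed.
Lemma t2pos_K : cancel t2pos_inv t2pos.
Proof. by case=> a b; rewrite /t2pos /t2pos_inv /= addrK. Qed.

Definition r_map : {perm arr} := perm (reidx_inj rpos_K).
Definition s_map : {perm arr} := perm (reidx_inj spos_K).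
Definition tau1 : {perm arr} := perm (reidx_inj t1pos_K).
Definition tau2 : {perm arr} := perm (reidx_inj t2pos_K).

(* Functional composition: (after g h) A = g (h A).  (MathComp's perm product
   is left-to-right: (h * g) A = g (h A).) *)
Definition after (g h : {perm arr}) : {perm arr} := (h * g)%g.

End Defs.

Definition codeI (t : nat) : {set point (nt t)} :=
  span2 ((t + 1)%:R, (t + 1)%:R) (0%R, (2 * (t + 1))%:R).
Definition codeII (t : nat) : {set point (nt t)} :=
  span1 (1%R, (2 * t + 1)%:R).

Definition caseI (t : nat) (C0 : {set point (nt t)}) : Prop :=
  code_equiv C0 (codeI t).
Definition caseII (t : nat) (C0 : {set point (nt t)}) : Prop :=
  code_equiv C0 (codeII t).

Definition groupI (t : nat) (x : point (nt t)) : {set {perm arr (nt t)}} :=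
  <<[set after (tau1 _ ^+ (t + 1)) (tau2 _ ^+ (t + 1));
         tau2 _ ^+ (2 * (t + 1));
         after (tau2 _ ^+ (2 * x.2 + 1)) (s_map _);
         after (tau1 _ ^+ (2 * x.1 + 2))
               (after (tau2 _ ^+ (2 * x.2 + 1)) (r_map _ ^+ 2))]>>%g.

Definition groupII (t : nat) (a b : 'Z_(nt t)) (x : point (nt t))
  : {set {perm arr (nt t)}} :=
  <<[set after (tau1 _ ^+ a) (tau2 _ ^+ b);
         after (tau1 _ ^+ (2 * x.1 + 2))
               (after (tau2 _ ^+ (2 * x.2 + 1)) (r_map _ ^+ 2))]>>%g.

From Pilot Require Import Defs.
From mathcomp Require Import all_boot all_order all_fingroup all_algebra.
From mathcomp Require Import zify ring.
Set Implicit Arguments. Unset Strict Implicit. Unset Printing Implicit Defensive.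
Import GRing.Theory.
Local Open Scope ring_scope.

(* Each generator of G_S acts on arrays as S |-> S o f for an affine map of
   positions f (i, j) = (+-i + k1, +-j + k2).  Such an f is a Lee isometry, so
   it maps the anticode with core {c, c + (1,0)} onto an anticode with core
   {c', c' + (1,0)}.  For every generator, c |-> c' permutes the code
   x + C0: it is a translation by a codeword, the reflection x + c0 |-> x - c0,
   or (Case I only) x + c0 |-> x + (c0_1, -c0_2).  Since codewords are at
   distance >= 2t+2 the anticodes are disjoint, so f merely permutes the colours
   of the palette grid; composing with f thus keeps a Latin square orthogonal
   to it. *)

Section LeeMetric.
Variable n : nat.
Hypothesis n_gt1 : (1 < n)%N.
Local Notation pt := (point n).
Local Notation e1 := ((1, 0) : pt).

Lemma ltn_Zp (a : 'Z_n) : (a < n)%N.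
Proof. by rewrite -[n in (_ < n)%N](Zp_cast n_gt1). Qed.

Lemma val_ZpD (a b : 'Z_n) : (a + b : 'Z_n) = ((a + b) %% n)%N :> nat.
Proof.
transitivity ((a + b) %% (Zp_trunc n).+2)%N => //.
by move: (_ + _)%N => m; rewrite (Zp_cast n_gt1).
Qed.

Lemma val_ZpN (a : 'Z_n) : (- a : 'Z_n) = ((n - a) %% n)%N :> nat.
Proof.
transitivity (((Zp_trunc n).+2 - a) %% (Zp_trunc n).+2)%N => //.
by move: (nat_of_ord a) => m; rewrite (Zp_cast n_gt1).
Qed.

Lemma leeZN (a : 'Z_n) : leeZ (- a) = leeZ a.
Proof.
rewrite /leeZ val_ZpN; have := ltn_Zp a.
case: (nat_of_ord a) => [|v] hv.
  by rewrite subn0 modnn subn0.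
rewrite modn_small; lia.
Qed.

Lemma leeZD (a b : 'Z_n) : (leeZ (a + b)%R <= leeZ a + leeZ b)%N.
Proof.
rewrite /leeZ val_ZpD; have := ltn_Zp a; have := ltn_Zp b.
move: (nat_of_ord a) (nat_of_ord b) => u v hv hu.
case: (ltnP (u + v) n) => h; first by rewrite modn_small //; lia.
have -> : (u + v = (u + v - n) + n)%N by lia.
rewrite modnDr modn_small; lia.
Qed.

Lemma leeZ_sign (b : bool) (a : 'Z_n) : leeZ ((-1) ^+ b * a) = leeZ a.
Proof. by rewrite mulr_sign; case: b; rewrite ?leeZN. Qed.

Lemma lee_distC (u v : pt) : lee_dist u v = lee_dist v u.
Proof. by rewrite /lee_dist /lee_wt -leeZN -[leeZ (_ - v.2)]leeZN !opprB. Qed.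

Lemma lee_dist_triangle (u v w : pt) :
  (lee_dist u w <= lee_dist u v + lee_dist v w)%N.
Proof.
rewrite /lee_dist /lee_wt /=.
rewrite -[u.1 - w.1](subrKA v.1) -[u.2 - w.2](subrKA v.2).
by rewrite addnACA; apply: leq_add; apply: leeZD.
Qed.

Lemma lee_distDl (e u v : pt) : lee_dist (padd e u) (padd e v) = lee_dist u v.
Proof.
by rewrite /lee_dist /lee_wt /psub /padd /=; congr (_ + _)%N; congr leeZ; ring.
Qed.

Lemma lee_distDr (e u v : pt) : lee_dist (padd u e) (padd v e) = lee_dist u v.
Proof.
by rewrite /lee_dist /lee_wt /psub /padd /=; congr (_ + _)%N; congr leeZ; ring.
Qed.

Lemma lee_dist_e1 (u : pt) : (lee_dist u (padd u e1) <= 1)%N.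
Proof.
rewrite /lee_dist /lee_wt /psub /padd /= addr0 subrr opprD addNKr leeZN.
by rewrite /leeZ /= min0n addn0 geq_minl.
Qed.

Lemma anticode_meet_dist t (c d p : pt) :
  p \in anticode t c -> p \in anticode t d -> (lee_dist c d <= 2 * t + 1)%N.
Proof.
have tri := lee_dist_triangle; have sym := lee_distC.
rewrite !inE => /orP[hc|hc] /orP[hd|hd]; have := lee_dist_e1 c; have := lee_dist_e1 d.
- have := tri c p d; rewrite (sym c p); lia.
- have := tri c p (padd d e1); have := tri c (padd d e1) d.
  rewrite (sym c p) (sym (padd d e1) d); lia.
- have := tri c (padd c e1) d; have := tri (padd c e1) p d.
  rewrite (sym (padd c e1) p); lia.
- rewrite -(lee_distDr e1 c d); have := tri (padd c e1) p (padd d e1).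
  rewrite (sym (padd c e1) p); lia.
Qed.

Lemma anticodes_disjoint t (C : {set pt}) :
  {in C &, forall u v, u != v -> 2 * t + 2 <= lee_dist u v}%N ->
  forall c d p, c \in C -> d \in C ->
    p \in anticode t c -> p \in anticode t d -> c = d.
Proof.
move=> Cdist c d p cC dC hc hd; apply/eqP; apply: contraLR (anticode_meet_dist hc hd).
by rewrite -ltnNge => /(Cdist _ _ cC dC); rewrite addn1 addn2.
Qed.

End LeeMetric.

Lemma coset_min_dist n t (x : point n) (C0 : {set point n}) :
  {in C0 &, forall u v, u != v -> 2 * t + 2 <= lee_dist u v}%N ->
  {in [set padd x c | c in C0] &, forall u v, u != v -> 2 * t + 2 <= lee_dist u v}%N.
Proof.
move=> C0dist _ _ /imsetP[u uC0 ->] /imsetP[v vC0 ->] neq_xuv.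
by rewrite lee_distDl; apply: C0dist => //; apply: contraNneq neq_xuv => ->.
Qed.

Lemma coset_stable n (x : point n) (C0 : {set point n}) (g h : point n -> point n) :
  {in C0, forall c, h c \in C0} -> (forall c, g (padd x c) = padd x (h c)) ->
  {in [set padd x c | c in C0], forall c, g c \in [set padd x c | c in C0]}.
Proof. by move=> hC0 gh _ /imsetP[c cC0 ->]; rewrite gh imset_f ?hC0. Qed.

Section AffineMaps.
Variable n : nat.
Hypothesis n_gt1 : (1 < n)%N.
Local Notation pt := (point n).
Local Notation e1 := ((1, 0) : pt).

Definition affZ (b : bool) (k a : 'Z_n) : 'Z_n := (-1) ^+ b * a + k.
Definition aff (b1 b2 : bool) (k p : pt) : pt := (affZ b1 k.1 p.1, affZ b2 k.2 p.2).

(* When the first coordinate is reflected, the image of the core {c, c + e1}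
   is the core whose first point is the image of c + e1. *)
Definition aff_core (b1 b2 : bool) (k c : pt) : pt :=
  aff b1 b2 k (if b1 then padd c e1 else c).

Lemma affZ_bij b k : bijective (affZ b k).
Proof.
exists (affZ b (- ((-1) ^+ b * k))) => a; rewrite /affZ mulrDr signrMK.
  by rewrite addrK.
by rewrite mulrN signrMK subrK.
Qed.

Lemma aff_inj b1 b2 k : injective (aff b1 b2 k).
Proof.
have [g1 K1 _] := affZ_bij b1 k.1; have [g2 K2 _] := affZ_bij b2 k.2.
move=> [p1 p2] [q1 q2] eq_pq; congr (_, _).
  exact: (can_inj K1 (congr1 fst eq_pq)).
exact: (can_inj K2 (congr1 snd eq_pq)).
Qed.

Lemma aff_core_inj b1 b2 k : injective (aff_core b1 b2 k).
Proof.
move=> [c1 c2] [d1 d2] /aff_inj; case: b1 => // eq_cd; congr (_, _).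
  exact: (addIr 1 (congr1 fst eq_cd)).
exact: (addIr 0 (congr1 snd eq_cd)).
Qed.

Lemma lee_dist_aff b1 b2 k p q :
  lee_dist (aff b1 b2 k p) (aff b1 b2 k q) = lee_dist p q.
Proof.
have affZB b k1 a a' : affZ b k1 a - affZ b k1 a' = (-1) ^+ b * (a - a').
  by rewrite /affZ opprD addrACA subrr addr0 mulrBr.
by rewrite /lee_dist /lee_wt /psub /= !affZB !leeZ_sign.
Qed.

Lemma padd_aff_core b1 b2 k c :
  padd (aff_core b1 b2 k c) e1 = aff b1 b2 k (if b1 then c else padd c e1).
Proof.
rewrite /aff_core /aff /affZ /padd /=; case: b1 => /=; congr (_, _); ring.
Qed.

Lemma mem_anticode_aff t b1 b2 k p c :
  (aff b1 b2 k p \in anticode t (aff_core b1 b2 k c)) = (p \in anticode t c).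
Proof.
rewrite !inE padd_aff_core /aff_core !lee_dist_aff.
by case: b1; rewrite // orbC.
Qed.
End AffineMaps.

Lemma imset_stable (T : finType) (g : T -> T) (A : {set T}) :
  injective g -> {in A, forall a, g a \in A} -> g @: A = A.
Proof.
move=> g_inj gA; apply/eqP; rewrite eqEcard card_imset // leqnn andbT.
by apply/subsetP=> _ /imsetP[a aA ->]; apply: gA.
Qed.

Lemma ex_unique_bij (T U : Type) (f : T -> U) (P : U -> Prop) (Q : T -> Prop) :
  bijective f -> (forall x, Q x <-> P (f x)) -> (exists! u, P u) -> exists! x, Q x.
Proof.
case=> g fK gK QP [u [Pu u_uniq]]; exists (g u); split; first by rewrite QP gK.
by move=> x /QP /u_uniq ->; rewrite fK.
Qed.

Section Palette.
Variables (n t : nat) (C : {set point n}).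
Local Notation pt := (point n).

Lemma paletteP p c : palette t C p = Some c -> c \in C /\ p \in anticode t c.
Proof. by rewrite /palette; case: pickP => [d /andP[dC pd] [<-] | //]. Qed.

Hypothesis anticodes_disj : forall c d p, c \in C -> d \in C ->
  p \in anticode t c -> p \in anticode t d -> c = d.

Lemma palette_in p c : c \in C -> p \in anticode t c -> palette t C p = Some c.
Proof.
move=> cC pc; rewrite /palette; case: pickP => [d /andP[dC pd] | none_c].
  by rewrite (anticodes_disj dC cC pd pc).
by have := none_c c; rewrite cC pc.
Qed.

Lemma palette_comp (f g : pt -> pt) :
  (forall p c, (f p \in anticode t (g c)) = (p \in anticode t c)) -> g @: C = C ->
  forall p, palette t C (f p) = omap g (palette t C p).
Proof.
move=> fgA gC p; case E: (palette t C p) => [c|] /=.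
  have [cC pc] := paletteP E.
  by apply: palette_in; [rewrite -gC imset_f | rewrite fgA].
case E' : (palette t C (f p)) => [d|] //; have [+ fpd] := paletteP E'.
rewrite -gC => /imsetP[c cC def_d]; rewrite def_d fgA in fpd.
by rewrite (palette_in cC fpd) in E.
Qed.

End Palette.

Lemma latin_reidx n (f1 f2 : 'Z_n -> 'Z_n) (S : arr n) :
  bijective f1 -> bijective f2 -> latin S ->
  latin (reidx (fun p => (f1 p.1, f2 p.2)) S).
Proof.
move=> f1_bij f2_bij [rows cols]; split=> [i k | j k].
  by apply: (ex_unique_bij f2_bij _ (rows (f1 i) k)) => j; rewrite ffunE.
by apply: (ex_unique_bij f1_bij _ (cols (f2 j) k)) => i; rewrite ffunE.
Qed.

Lemma orthogonal_reidx n (T : Type) (f : point n -> point n) (S : arr n)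
    (P : point n -> T) :
  injective f -> (forall p q, P p = P q -> P (f p) = P (f q)) ->
  Defs.orthogonal S P -> Defs.orthogonal (reidx f S) P.
Proof.
move=> f_inj Pf orthSP p q; rewrite !ffunE => -[Sfpq Ppq].
by apply/f_inj/orthSP; rewrite Sfpq (Pf _ _ Ppq).
Qed.

Lemma sudoku_reidx_aff n t (C : {set point n}) b1 b2 k (S : arr n) :
  (1 < n)%N ->
  (forall c d p, c \in C -> d \in C ->
     p \in anticode t c -> p \in anticode t d -> c = d) ->
  {in C, forall c, aff_core b1 b2 k c \in C} ->
  sudoku t C S -> sudoku t C (reidx (aff b1 b2 k) S).
Proof.
move=> n_gt1 disj C_stable [latS orthS]; split.
  exact: latin_reidx (affZ_bij _ _) (affZ_bij _ _) latS.
apply: orthogonal_reidx orthS; first exact: aff_inj.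
have gC := imset_stable (@aff_core_inj n b1 b2 k) C_stable.
have palE := palette_comp disj (mem_anticode_aff n_gt1 t b1 b2 k) gC.
by move=> p q; rewrite !palE => ->.
Qed.

Lemma gen_perm_stable (T : finType) (P : T -> Prop) (A : {set {perm T}}) :
  (forall h S, h \in A -> P S -> P (h S)) ->
  forall g S, g \in <<A>>%g -> P S -> P (g S).
Proof.
move=> A_stable g S /gen_prodgP[m [c Ac ->]].
elim: m c Ac S => [|m IHm] c Ac S PS; first by rewrite big_ord0 perm1.
by rewrite big_ord_recr permM; apply/A_stable/IHm.
Qed.

Section ArrayMaps.
Variable n : nat.
Implicit Type A : arr n.

Lemma tau1_expE m A : (tau1 n ^+ m)%g A = reidx (aff false false (- m%:R, 0)) A.
Proof.
elim: m A => [|m IHm] A; apply/ffunP=> p; rewrite /aff /affZ /=.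
  by rewrite expg0 perm1 !ffunE expr0 !mul1r subr0 addr0; case: p.
rewrite expgSr permM IHm /tau1 permE !ffunE /t1pos /aff /affZ /=.
by congr (A (_, _)); rewrite mulrS; ring.
Qed.

Lemma tau2_expE m A : (tau2 n ^+ m)%g A = reidx (aff false false (0, - m%:R)) A.
Proof.
elim: m A => [|m IHm] A; apply/ffunP=> p; rewrite /aff /affZ /=.
  by rewrite expg0 perm1 !ffunE expr0 !mul1r subr0 addr0; case: p.
rewrite expgSr permM IHm /tau2 permE !ffunE /t2pos /aff /affZ /=.
by congr (A (_, _)); rewrite mulrS; ring.
Qed.

Lemma translation_genE m1 m2 A :
  after (tau1 n ^+ m1) (tau2 n ^+ m2) A = reidx (aff false false (- m1%:R, - m2%:R)) A.
Proof.
rewrite /after permM tau1_expE tau2_expE; apply/ffunP=> p.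
by rewrite !ffunE /aff /affZ /=; congr (A (_, _)); ring.
Qed.

Lemma reflection_genE m A :
  after (tau2 n ^+ m) (s_map n) A = reidx (aff false true (0, m%:R - 1)) A.
Proof.
rewrite /after permM tau2_expE /s_map permE; apply/ffunP=> p.
by rewrite !ffunE /spos /aff /affZ /=; congr (A (_, _)); ring.
Qed.

Lemma rotation_genE m1 m2 A :
  after (tau1 n ^+ m1) (after (tau2 n ^+ m2) (r_map n ^+ 2)) A
  = reidx (aff true true (m1%:R - 1, m2%:R - 1)) A.
Proof.
rewrite /after !permM tau1_expE tau2_expE /r_map !permE.
by apply/ffunP=> p; rewrite !ffunE /rpos /aff /affZ /=; congr (A (_, _)); ring.
Qed.

End ArrayMaps.

Lemma nt_gt1 t : (1 < nt t)%N.
Proof. by rewrite /nt; nia. Qed.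

Lemma codeI_mem t (k1 k2 : 'Z_(nt t)) (c : point (nt t)) :
  c = (k1 * (t + 1)%:R, k1 * (t + 1)%:R + k2 * (2 * (t + 1))%:R) -> c \in codeI t.
Proof.
move=> ->; apply/imset2P; exists k1 k2 => //.
by rewrite /padd /pscale /=; congr (_, _); ring.
Qed.

Lemma caseI_mem t (C0 : {set point (nt t)}) : caseI C0 ->
  [/\ ((t + 1)%:R, (t + 1)%:R) \in C0, (0, (2 * (t + 1))%:R) \in C0
    & {in C0, forall c, (c.1, - c.2) \in C0}].
Proof.
have two_t1 : (2 * (t + 1))%:R = 2 * (t + 1)%:R :> 'Z_(nt t) by rewrite natrM.
have swap_inj : injective (@swap_pt (nt t)) by move=> [? ?] [? ?] [-> ->].
case=> [<-|codeI_swap].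
  split; first by apply: (@codeI_mem _ 1 0); congr (_, _); ring.
    by apply: (@codeI_mem _ 0 1); congr (_, _); ring.
  move=> _ /imset2P[k1 k2 _ _ ->]; apply: (@codeI_mem _ k1 (- k1 - k2)).
  by rewrite /padd /pscale /= two_t1; congr (_, _); ring.
have mem_swap c : (c \in C0) = (swap_pt c \in codeI t).
  by rewrite codeI_swap mem_imset.
rewrite !mem_swap; split.
- by apply: (@codeI_mem _ 1 0); rewrite /swap_pt /=; congr (_, _); ring.
- by apply: (@codeI_mem _ 2 (-1)); rewrite /swap_pt /= two_t1; congr (_, _); ring.
move=> c; rewrite !mem_swap => /imset2P[k1 k2 _ _ [-> ->]].
apply: (@codeI_mem _ (- k1) (k1 + k2)).
by rewrite /swap_pt /= two_t1; congr (_, _); ring.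
Qed.

Lemma natr_double_Zp n (z : 'Z_n) m : ((2 * z + m)%N%:R : 'Z_n) = 2 * z + m%:R.
Proof. by rewrite natrD natrM natr_Zp. Qed.

Section CosetCode.
Variables (n : nat) (t : nat) (C0 : {set point n}) (x : point n).
Hypothesis n_gt1 : (1 < n)%N.
Hypothesis C0D : forall u v, u \in C0 -> v \in C0 -> padd u v \in C0.
Hypothesis C0N : forall u, u \in C0 -> psub (0, 0) u \in C0.
Hypothesis C0dist : {in C0 &, forall u v, u != v -> 2 * t + 2 <= lee_dist u v}%N.
Local Notation C := [set padd x c | c in C0].

Lemma sudoku_coset_aff b1 b2 k (h : point n -> point n) (S : arr n) :
  {in C0, forall c, h c \in C0} ->
  (forall c, aff_core b1 b2 k (padd x c) = padd x (h c)) ->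
  sudoku t C S -> sudoku t C (reidx (aff b1 b2 k) S).
Proof.
move=> hC0 hx; apply: sudoku_reidx_aff n_gt1 _ (coset_stable hC0 hx).
by move=> c d p; apply: (anticodes_disjoint n_gt1); apply: coset_min_dist.
Qed.

Lemma sudoku_coset_translate v k (S : arr n) : v \in C0 -> padd v k = (0, 0) ->
  sudoku t C S -> sudoku t C (reidx (aff false false k) S).
Proof.
move=> vC0 vk0; apply: (@sudoku_coset_aff _ _ _ (fun c => padd c k)) => [c cC0 | c].
  have -> : k = psub (padd v k) v.
    by case: k {vk0} => k1 k2; rewrite /psub /padd /=; congr (_, _); ring.
  by rewrite vk0; apply/C0D/C0N.
by rewrite /aff_core /aff /affZ /padd /=; congr (_, _); ring.
Qed.

Lemma sudoku_coset_rotation (S : arr n) : sudoku t C S ->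
  sudoku t C (after (tau1 n ^+ (2 * x.1 + 2))
                    (after (tau2 n ^+ (2 * x.2 + 1)) (r_map n ^+ 2)) S).
Proof.
rewrite rotation_genE.
apply: (@sudoku_coset_aff _ _ _ (psub (0, 0))) => [c /C0N // | c].
by rewrite /aff_core /aff /affZ /padd /psub /= !natr_double_Zp; congr (_, _); ring.
Qed.

Lemma sudoku_coset_reflection (S : arr n) :
  {in C0, forall c, (c.1, - c.2) \in C0} -> sudoku t C S ->
  sudoku t C (after (tau2 n ^+ (2 * x.2 + 1)) (s_map n) S).
Proof.
move=> C0_refl; rewrite reflection_genE; apply: (sudoku_coset_aff C0_refl) => c.
by rewrite /aff_core /aff /affZ /padd /= natr_double_Zp; congr (_, _); ring.
Qed.

End CosetCode.

Theorem mainTheorem4 (t : nat) (ht : (1 <= t)%N)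
  (C0 : {set point (nt t)}) (x : point (nt t)) :
  linear_code C0 -> diam_perfect t C0 ->
  let C := [set padd x c | c in C0] in
  caseI C0 \/ caseII C0 ->
  (caseI C0 ->
     forall (S : arr (nt t)) (g : {perm arr (nt t)}),
       sudoku t C S -> g \in groupI x -> sudoku t C (g S)) /\
  (forall a b : 'Z_(nt t),
     caseII C0 -> C0 = span1 (a, b) ->
     forall (S : arr (nt t)) (g : {perm arr (nt t)}),
       sudoku t C S -> g \in groupII a b x -> sudoku t C (g S)).
Proof.
move=> [_ C0D C0N _] [C0dist _ _] C _; have n_gt1 := nt_gt1 t.
have translate := sudoku_coset_translate (x := x) n_gt1 C0D C0N C0dist.
have rotate := sudoku_coset_rotation (x := x) n_gt1 C0N C0dist.
split=> [/caseI_mem [uC0 wC0 C0_refl] | a b _ def_C0] S g hS hg;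
  apply: (gen_perm_stable (P := sudoku t C) _ hg hS) => {g S hS hg} h S; rewrite !inE.
- case/orP=> [/orP[/orP[]|]|] /eqP-> hS; last exact: rotate.
  + by rewrite translation_genE; apply: translate uC0 _ hS; rewrite /padd /= !subrr.
  + by rewrite tau2_expE; apply: translate wC0 _ hS; rewrite /padd /= addr0 subrr.
  + exact: (sudoku_coset_reflection (x := x) n_gt1 C0dist C0_refl hS).
- have abC0 : (a, b) \in C0.
    by rewrite def_C0; apply/imsetP; exists 1; rewrite // /pscale /= !mul1r.
  case/orP=> /eqP-> hS; last exact: rotate.
  rewrite translation_genE; apply: translate abC0 _ hS.
  by rewrite /padd /= !natr_Zp !subrr.
Qed.
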